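(* Let $(G,\varphi)$ be a complex unit gain graph whose underlying graph $G$ has order $n$. Then $$2n-2c(G)-2\alpha(G)\le r(G,\varphi)\le 2n-2\alpha(G).$$
   Context: All graphs are simple and finite. A complex unit gain graph $(G,\varphi)$ consists of a simple graph $G$ with vertex set $\{v_1,\dots,v_n\}$ and a gain function $\varphi$ assigning to each oriented edge $e_{ij}$ (from $v_i$ to $v_j$, for each edge $v_iv_j$ of $G$) a complex number $\varphi(e_{ij})$ with $|\varphi(e_{ij})|=1$, such that $\varphi(e_{ji})=\varphi(e_{ij})^{-1}=\overline{\varphi(e_{ij})}$. Its adjacency matrix $A(G,\varphi)=(a_{ij})$ is the $n\times n$ Hermitian matrix with $a_{ij}=\varphi(e_{ij})$ if $v_i$ and $v_j$ are adjacent and $a_{ij}=0$ otherwise; $r(G,\varphi)$ denotes the rank of $A(G,\varphi)$. $\alpha(G)$ is the independence number of $G$ (the maximum size of a set of pairwise non-adjacent vertices), and $c(G)=|E(G)|-|V(G)|+\omega(G)$ is the cyclomatic number of $G$, where $\omega(G)$ is the number of connected components of $G$. *)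

From HB Require Import structures.
From mathcomp Require Import all_boot all_order all_algebra.
Set Implicit Arguments. Unset Strict Implicit. Unset Printing Implicit Defensive.
Import Order.TTheory GRing.Theory Num.Theory.
Local Open Scope ring_scope.

Definition simple_graph (n : nat) (e : rel 'I_n) : Prop :=
  symmetric e /\ irreflexive e.

Definition unit_gain (C : numClosedFieldType) (n : nat) (e : rel 'I_n)
  (phi : 'I_n -> 'I_n -> C) : Prop :=
  forall i j, e i j -> `|phi i j| = 1 /\ phi j i = (phi i j)^-1 /\ phi j i = (phi i j)^*.

Definition gain_adj (C : numClosedFieldType) (n : nat) (e : rel 'I_n)
  (phi : 'I_n -> 'I_n -> C) : 'M[C]_n :=
  \matrix_(i, j) (if e i j then phi i j else 0).

Definition independent (n : nat) (e : rel 'I_n) (S : {set 'I_n}) : bool :=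
  [forall x in S, forall y in S, ~~ e x y].

Definition indep_num (n : nat) (e : rel 'I_n) : nat :=
  \max_(S : {set 'I_n} | independent e S) #|S|.

Definition num_edges (n : nat) (e : rel 'I_n) : nat :=
  #|[set p : 'I_n * 'I_n | e p.1 p.2 && (p.1 < p.2)%N]|.

Definition num_comp (n : nat) (e : rel 'I_n) : nat := n_comp e predT.

Definition cyclomatic (n : nat) (e : rel 'I_n) : int :=
  (num_edges e)%:Z - n%:Z + (num_comp e)%:Z.

From HB Require Import structures.
From mathcomp Require Import all_boot all_order all_algebra.
From Stdlib Require Import Lia.
From mathcomp Require Import zify.
Set Implicit Arguments. Unset Strict Implicit. Unset Printing Implicit Defensive.
Import Order.TTheory GRing.Theory Num.Theory.

(* Upper bound: for a maximum independent set S the rows of A indexed by S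
   vanish on the columns indexed by S, so A is the sum of a matrix supported on
   the n - alpha rows outside S and one supported on the n - alpha columns
   outside S.
   Lower bound, in the form 4n <= r + 2|E| + 2 omega + 2 alpha: induction on
   |E|.  The end x' of a maximal path has all its neighbours on the path, so
   either x' is pendant and we isolate its neighbour v, or x' has two neighbours
   joined by a path avoiding x' and we isolate v := x'.  Isolating v deletes
   deg v edges, raises alpha by at most 1 and omega by at most deg v; in the
   pendant case the rank drops by at least 2, in the cycle case omega rises by
   at most deg v - 1. *)

Section Isolate.
Variables (T : finType) (e : rel T).

Definition isolate (v : T) : rel T := [rel x y | [&& e x y, x != v & y != v]].

Definition closed_nbhd (v : T) : {set T} := v |: [set y | e v y].

Definition degree (v : T) : nat := #|[set y | e v y]|.

Lemma sub_isolate v x y : isolate v x y -> e x y.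
Proof. by case/and3P. Qed.

Lemma isolate_irr v : irreflexive e -> irreflexive (isolate v).
Proof. by move=> irr_e x; rewrite /isolate /= irr_e. Qed.

Hypothesis sym_e : symmetric e.

Lemma isolate_sym v : symmetric (isolate v).
Proof. by move=> x y; rewrite /isolate /= sym_e [(x != v) && _]andbC. Qed.

Lemma connect_isolate v x :
  (forall y, y \in closed_nbhd v -> ~~ connect (isolate v) x y) ->
  forall z, connect e x z -> connect (isolate v) x z.
Proof.
move=> far z /connectP [p]; elim: p x far => [|y p IH] w far /=.
  by move=> _ ->; apply: connect0.
case/andP=> e_wy p_y z_last.
have w_v : w != v.
  by apply: (contraNneq _ (far v (setU11 _ _))) => ->; apply: connect0.
have y_v : y != v.
  apply/eqP=> y_v; have /far : w \in closed_nbhd v by rewrite !inE -y_v sym_e e_wy orbT.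
  by rewrite connect0.
have c_wy : connect (isolate v) w y by apply: connect1; rewrite /isolate /= e_wy w_v.
apply: (connect_trans c_wy (IH y _ p_y z_last)) => u u_N.
exact: contra (connect_trans c_wy) (far u u_N).
Qed.

Lemma n_comp_isolate_le v :
  n_comp (isolate v) predT + 1 <=
    n_comp e predT + #|fingraph.root (isolate v) @: closed_nbhd v|.
Proof.
have csi := sym_connect_sym (isolate_sym v); have cse := sym_connect_sym sym_e.
set I := _ @: _; set R := [set x | roots (isolate v) x]; set Re := [set x | roots e x].
have -> : n_comp (isolate v) predT = #|R| by apply: eq_card => x; rewrite !inE andbT.
have -> : n_comp e predT = #|Re| by apply: eq_card => x; rewrite !inE andbT.
have far x : x \in R :\: I -> forall y, y \in closed_nbhd v -> ~~ connect (isolate v) x y.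
  rewrite !inE => /andP[x_I /eqP x_root] y y_N; apply: contra x_I => c_xy.
  by apply/imsetP; exists y => //; rewrite -x_root; apply/(fingraph.rootP csi).
have root_inj : {in R :\: I &, injective (fingraph.root e)}.
  move=> x1 x2 x1_R x2_R /(fingraph.rootP cse) /(connect_isolate (far _ x1_R)).
  move/(fingraph.rootP csi).
  by move: x1_R x2_R; rewrite !inE => /andP[_ /eqP ->] /andP[_ /eqP ->].
have sub_Re : fingraph.root e @: (R :\: I) \subset Re :\ fingraph.root e v.
  apply/subsetP=> _ /imsetP[x x_R ->]; rewrite !inE roots_root // andbT.
  apply: contra (far x x_R v (setU11 _ _)) => /eqP /(fingraph.rootP cse).
  exact: connect_isolate (far x x_R) v.
have v_Re : fingraph.root e v \in Re by rewrite inE roots_root.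
have := subset_leq_card sub_Re.
rewrite card_in_imset // (cardsD1 (fingraph.root e v) Re) v_Re.
have := subset_leq_card (subsetIr R I); rewrite -(cardsID I R); lia.
Qed.

Hypothesis irr_e : irreflexive e.

Lemma card_closed_nbhd v : #|closed_nbhd v| = (degree v).+1.
Proof. by rewrite cardsU1 inE irr_e. Qed.

Lemma n_comp_isolate v : n_comp (isolate v) predT <= n_comp e predT + degree v.
Proof.
have := n_comp_isolate_le v.
have := leq_imset_card (fingraph.root (isolate v)) (closed_nbhd v).
rewrite card_closed_nbhd; lia.
Qed.

Lemma n_comp_isolate_cycle v a b :
  a != b -> e v a -> e v b -> connect (isolate v) a b ->
  n_comp (isolate v) predT < n_comp e predT + degree v.
Proof.
move=> a_b v_a v_b c_ab; have csi := sym_connect_sym (isolate_sym v).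
have a_N : a \in closed_nbhd v by rewrite !inE v_a orbT.
have sub : fingraph.root (isolate v) @: closed_nbhd v \subset
           fingraph.root (isolate v) @: (closed_nbhd v :\ a).
  apply/subsetP=> _ /imsetP[x x_N ->]; apply/imsetP.
  have [-> | x_a] := eqVneq x a; last by exists x; rewrite // in_setD1 x_a.
  exists b; first by rewrite !inE eq_sym a_b v_b orbT.
  exact/(fingraph.rootP csi).
have := leq_trans (subset_leq_card sub) (leq_imset_card _ _).
have := n_comp_isolate_le v; have := cardsD1 a (closed_nbhd v).
rewrite a_N card_closed_nbhd; lia.
Qed.

Lemma maximal_path x p : path e x p -> uniq (x :: p) ->
  exists x' s, [/\ path e x' s, uniq (x' :: s),
                   forall z, e x' z -> z \in s & size p <= size s].
Proof.
have [k] := ubnP (#|T| - size p); elim: k x p => // k IH x p lt_k p_x u_x.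
case: (pickP [pred z | e x z & z \notin x :: p]) => [z /andP[e_xz z_new] | closed].
  have u_z : uniq (z :: x :: p) by rewrite cons_uniq z_new u_x.
  have := max_card (mem (z :: x :: p)); rewrite (card_uniqP u_z) /= => size_le.
  have lt_k' : #|T| - size (x :: p) < k by move: lt_k => /=; lia.
  have p_z : path e z (x :: p) by rewrite /= sym_e e_xz.
  have [x' [s [p_x' u_x' nbr_x' size_s]]] := IH z (x :: p) lt_k' p_z u_z.
  by exists x', s; split=> //; move: size_s => /=; lia.
exists x, p; split=> // z e_xz; move: (closed z) => /= /negbT.
by rewrite e_xz negbK inE; case: eqP e_xz => [-> | //]; rewrite irr_e.
Qed.

Lemma exists_pendant_or_cycle_vertex x y : e x y -> exists v, 0 < degree v /\
  ((exists u, forall z, e u z = (z == v)) \/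
   exists a b, [/\ a != b, e v a, e v b & connect (isolate v) a b]).
Proof.
move=> e_xy; have x_y : x != y by apply: contraTneq e_xy => ->; rewrite irr_e.
have p_x : path e x [:: y] by rewrite /= e_xy.
have u_x : uniq [:: x; y] by rewrite /= inE x_y.
have [x' [[|x1 s] [p_x' u_x' nbr_x' //]]] := maximal_path p_x u_x.
case/andP: p_x' => e_x'x1 p_x1; case/andP: u_x' => x'_s _.
case: (pickP [pred z | e x' z & z != x1]) => [z /andP[e_x'z z_x1] | pendant].
  exists x'; split; first by apply/card_gt0P; exists x1; rewrite inE.
  right; exists x1, z; split=> //; first by rewrite eq_sym.
  have z_s : z \in x1 :: s by exact: nbr_x'.
  apply: path_connect z_s; apply: (sub_in_path (P := predC1 x') _ _ p_x1).
    by move=> a b; rewrite !inE => a_x' b_x' e_ab; rewrite /isolate /= e_ab a_x' b_x'.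
  by apply/allP=> w w_s; rewrite inE; apply: contraNneq x'_s => <-.
exists x1; split; first by apply/card_gt0P; exists x'; rewrite inE sym_e.
left; exists x' => z; apply/idP/eqP=> [e_x'z | ->] //.
by apply/eqP; move: (pendant z) => /= /negbT; rewrite e_x'z negbK.
Qed.
End Isolate.

Section OrdinalGraph.
Variables (n : nat) (e : rel 'I_n).

Lemma num_edges_isolate v : symmetric e -> irreflexive e ->
  num_edges e = num_edges (isolate e v) + degree e v.
Proof.
move=> sym_e irr_e; rewrite /num_edges.
set E := [set p : 'I_n * 'I_n | _].
set B := [set p : 'I_n * 'I_n | (p.1 == v) || (p.2 == v)].
rewrite -(cardsID B E) addnC; congr (_ + _).
  apply: eq_card => -[a b]; rewrite !inE /isolate /= negb_or.
  by case: (e a b); case: (a < b); case: (a == v); case: (b == v).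
pose edge_at (y : 'I_n) := if v < y then (v, y) else (y, v).
have edge_at_inj : {in [set y | e v y] &, injective edge_at}.
  move=> y1 y2; rewrite !inE /edge_at => e_v1 e_v2.
  have [y1_v y2_v] : y1 != v /\ y2 != v.
    by split; [apply: contraTneq e_v1 | apply: contraTneq e_v2] => ->; rewrite irr_e.
  by case: (ltnP v y1); case: (ltnP v y2) => _ _ [] // => *; subst; rewrite eqxx in y1_v.
rewrite /degree -(card_in_imset edge_at_inj); apply: eq_card => -[a b].
rewrite !inE /=; apply/idP/imsetP => [|[y]].
  case/andP=> /andP[e_ab a_b] /orP[/eqP a_v | /eqP b_v].
    by exists b; rewrite ?inE -?a_v // /edge_at -a_v a_b.
  exists a; first by rewrite inE sym_e -b_v.
  by rewrite /edge_at -b_v ltnNge ltnW.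
rewrite inE /edge_at => e_vy.
have y_v : y != v by apply: contraTneq e_vy => ->; rewrite irr_e.
case: ltnP => y_le [-> ->] /=; first by rewrite e_vy y_le eqxx.
by rewrite sym_e e_vy eqxx orbT ltn_neqAle y_le andbT (inj_eq val_inj) y_v.
Qed.

Lemma independent0 : independent e set0.
Proof. by apply/forallP=> x; rewrite inE. Qed.

Lemma indep_num_attained : exists2 S, independent e S & #|S| = indep_num e.
Proof.
rewrite /indep_num (bigop.bigmax_eq_arg set0 independent0).
by case: arg_maxnP => [|S ? _]; [exact: independent0 | exists S].
Qed.

Lemma card_independent_le S : independent e S -> #|S| <= indep_num e.
Proof. exact: bigop.leq_bigmax_cond. Qed.

Lemma indep_num_le : indep_num e <= n.
Proof.
by have [S _ <-] := indep_num_attained; rewrite -[X in _ <= X]card_ord max_card.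
Qed.

Lemma indep_num_isolate v : indep_num (isolate e v) <= (indep_num e).+1.
Proof.
apply/bigop.bigmax_leqP=> S /forallP S_indep.
have : independent e (S :\ v).
  apply/forallP=> x; apply/implyP=> /setD1P[x_v x_S].
  apply/forallP=> y; apply/implyP=> /setD1P[y_v y_S].
  move: (implyP (S_indep x) x_S) => /forallP /(_ y) /implyP /(_ y_S).
  by rewrite /isolate /= x_v y_v !andbT.
move/card_independent_le; rewrite (cardsD1 v S).
by case: (v \in S); rewrite ?add1n ?add0n ?ltnS // => /leqW.
Qed.

Hypothesis edgeless : forall x y, ~~ e x y.

Lemma indep_num_edgeless : indep_num e = n.
Proof.
apply/eqP; rewrite eqn_leq indep_num_le -[X in X <= _]card_ord -cardsT.
apply: card_independent_le; apply/forallP=> x; apply/implyP=> _.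
by apply/forallP=> y; rewrite edgeless implybT.
Qed.

Lemma num_comp_edgeless : num_comp e = n.
Proof.
rewrite /num_comp -[RHS]card_ord; apply: eq_card => x; rewrite !inE andbT /roots.
have /connectP[[|y p] /= p_x ->] := connect_root e x; first by rewrite eqxx.
by move: p_x; rewrite (negbTE (edgeless _ _)).
Qed.
End OrdinalGraph.

Local Open Scope ring_scope.

Section RankLemmas.
Variable F : fieldType.

Lemma submx_zero_rows m p (M N : 'M[F]_(m, p)) (P : pred 'I_m) :
  (forall i j, M i j = if P i then N i j else 0) -> (M <= N)%MS.
Proof.
move=> M_def; apply/row_subP=> i.
have -> : row i M = if P i then row i N else 0.
  by apply/rowP=> j; rewrite !mxE M_def; case: (P i); rewrite ?mxE.
by case: (P i); rewrite ?row_sub ?sub0mx.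
Qed.

Lemma mxrank_zero_rows m p (M : 'M[F]_(m, p)) (S : {set 'I_m}) :
  (forall i j, i \notin S -> M i j = 0) -> (\rank M <= #|S|)%N.
Proof.
move=> M0; apply: leq_trans (rank_leq_row (rowsub (@enum_val _ (mem S)) M)).
apply: mxrankS; apply/row_subP=> i; have [i_S | i_S] := boolP (i \in S).
  by rewrite -(enum_rankK_in i_S i_S) -row_rowsub row_sub.
have -> : row i M = 0 by apply/rowP=> j; rewrite !mxE M0.
exact: sub0mx.
Qed.

Lemma mxrank_col_mx_pivot m p (U : 'M[F]_(m, p)) (w : 'rV[F]_p) k :
  (forall i, U i k = 0) -> w 0 k != 0 -> \rank (col_mx U w) = (\rank U).+1.
Proof.
move=> U_k0 w_k; rewrite -addsmxE.
have w_neq0 : w != 0 by apply: contraNneq w_k => ->; rewrite mxE.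
apply/eqP; rewrite eqn_leq; apply/andP; split.
  by have [le_r _] := mxrank_adds_leqif U w; rewrite rank_rV w_neq0 addn1 in le_r.
rewrite (ltn_leqif (mxrank_leqif_sup (addsmxSl U w))).
apply: (contraNN _ w_k) => /(submx_trans (addsmxSr U w)) /submxP[D ->].
by rewrite mxE big1 // => i _; rewrite U_k0 mulr0.
Qed.
End RankLemmas.

Section GainAdjacency.
Variables (C : numClosedFieldType) (n : nat) (e : rel 'I_n) (phi : 'I_n -> 'I_n -> C).

Lemma mxrank_gain_adj_isolate v :
  (\rank (gain_adj (isolate e v) phi) <= \rank (gain_adj e phi))%N.
Proof.
set A := gain_adj e phi; pose Av := \matrix_(i, j) (if i != v then A i j else 0).
have Av_A : (Av <= A)%MS by apply: (submx_zero_rows (P := predC1 v)) => i j; rewrite mxE.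
have A'_Av : ((gain_adj (isolate e v) phi)^T <= Av^T)%MS.
  apply: (submx_zero_rows (P := predC1 v)) => i j; rewrite !mxE /isolate /=.
  by case: (e j i); case: (i != v); case: (j != v).
by rewrite -mxrank_tr (leq_trans (mxrankS A'_Av)) // mxrank_tr mxrankS.
Qed.

Lemma mxrank_gain_adj_pendant u v :
  symmetric e -> irreflexive e -> (forall i j, e i j -> phi i j != 0) ->
  (forall z, e u z = (z == v)) ->
  (\rank (gain_adj (isolate e v) phi) + 2 <= \rank (gain_adj e phi))%N.
Proof.
move=> sym_e irr_e phi_e u_pendant.
set A := gain_adj e phi; set A' := gain_adj (isolate e v) phi.
have e_uv : e u v by rewrite u_pendant.
have e_vu : e v u by rewrite sym_e.
have phi_uv := phi_e _ _ e_uv.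
have A_u j : A u j = if j == v then phi u v else 0.
  by rewrite mxE u_pendant; case: eqP => // ->.
(* Rows u and v of A have pivots in columns v and u, where A' vanishes; the
   other rows of A' are rows of A minus a multiple of row u. *)
have rank_u : \rank (col_mx A' (row u A)) = (\rank A').+1.
  apply: (mxrank_col_mx_pivot (k := v)) => [i|]; first by rewrite mxE /isolate /= eqxx !andbF.
  by rewrite mxE A_u eqxx.
have rank_uv : \rank (col_mx (col_mx A' (row u A)) (row v A)) = (\rank A').+2.
  rewrite (mxrank_col_mx_pivot (k := u)) ?rank_u // => [i|]; last first.
    by rewrite !mxE e_vu phi_e.
  rewrite -[i]splitK; case: (split i) => k /=; rewrite ?col_mxEu ?col_mxEd !mxE ?irr_e //.
  by rewrite /isolate /= sym_e u_pendant; case: (k == v).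
have row_A' i : i != v -> row i A' = row i A - (A i v / phi u v) *: row u A.
  move=> i_v; apply/rowP=> j; rewrite !mxE u_pendant /isolate /= i_v.
  have [-> | j_v] := eqVneq j v; last by rewrite mulr0 subr0 andbT.
  by rewrite andbF divfK // subrr.
have sub_A : (col_mx (col_mx A' (row u A)) (row v A) <= A)%MS.
  rewrite !col_mx_sub !row_sub !andbT; apply/row_subP=> i.
  have [-> | i_v] := eqVneq i v.
    have -> : row v A' = 0 by apply/rowP=> j; rewrite !mxE /isolate /= eqxx andbF.
    exact: sub0mx.
  by rewrite row_A' // addmx_sub ?eqmx_opp ?scalemx_sub ?row_sub.
by rewrite addn2 -rank_uv mxrankS.
Qed.

Lemma mxrank_gain_adj_indep : (\rank (gain_adj e phi) <= 2 * (n - indep_num e))%N.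
Proof.
have [S S_indep <-] := indep_num_attained e.
set A := gain_adj e phi.
pose A_S := \matrix_(i, j) (if i \in S then A i j else 0).
pose A_notS := \matrix_(i, j) (if i \in S then 0 else A i j).
have -> : A = A_S + A_notS.
  by apply/matrixP=> i j; rewrite !mxE; case: (i \in S); rewrite ?addr0 ?add0r.
have rank_notS : (\rank A_notS <= #|~: S|)%N.
  by apply: mxrank_zero_rows => i j; rewrite inE negbK !mxE => ->.
have rank_S : (\rank A_S <= #|~: S|)%N.
  rewrite -mxrank_tr; apply: mxrank_zero_rows => j i; rewrite inE negbK !mxE => j_S.
  have [i_S | //] := boolP (i \in S).
  move/forallP: S_indep => /(_ i) /implyP /(_ i_S) /forallP /(_ j) /implyP /(_ j_S).
  by move/negbTE ->.
have card_notS : #|~: S| = (n - #|S|)%N.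
  by rewrite -[X in (X - _)%N](card_ord n) -(cardsC S) addKn.
by rewrite -card_notS mul2n -addnn (leq_trans (mxrank_add _ _)) ?leq_add.
Qed.
End GainAdjacency.

Lemma unit_gain_neq0 (C : numClosedFieldType) n (e : rel 'I_n) (phi : 'I_n -> 'I_n -> C) :
  unit_gain e phi -> forall i j, e i j -> phi i j != 0.
Proof. by move=> ug i j /ug[phi1 _]; rewrite -normr_eq0 phi1 oner_eq0. Qed.

Lemma mxrank_gain_adj_lower (C : numClosedFieldType) n (phi : 'I_n -> 'I_n -> C)
    (e : rel 'I_n) :
  symmetric e -> irreflexive e -> (forall i j, e i j -> phi i j != 0) ->
  (4 * n <= \rank (gain_adj e phi) + 2 * num_edges e + 2 * num_comp e
              + 2 * indep_num e)%N.
Proof.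
have [k] := ubnP (num_edges e); elim: k e => // k IH e lt_k sym_e irr_e phi_e.
case: (pickP [pred p : 'I_n * 'I_n | e p.1 p.2]) => [[x y] /= e_xy | edgeless]; last first.
  have no_edge x y : ~~ e x y by move: (edgeless (x, y)) => /= ->.
  by rewrite num_comp_edgeless // indep_num_edgeless //; lia.
have [v [deg_v cases]] := exists_pendant_or_cycle_vertex sym_e irr_e e_xy.
have edges_v := num_edges_isolate v sym_e irr_e.
have lt_edges_v : (num_edges (isolate e v) < k)%N by lia.
have := IH _ lt_edges_v (isolate_sym sym_e v) (isolate_irr v irr_e)
  (fun i j e'_ij => phi_e i j (sub_isolate e'_ij)).
have := indep_num_isolate e v; rewrite /num_comp.
case: cases => [[u u_pendant] | [a [b [a_b v_a v_b c_ab]]]].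
- have := mxrank_gain_adj_pendant sym_e irr_e phi_e u_pendant.
  have := n_comp_isolate sym_e irr_e v; lia.
- have := mxrank_gain_adj_isolate e phi v.
  have := n_comp_isolate_cycle sym_e irr_e a_b v_a v_b c_ab; lia.
Qed.

Unset Implicit Arguments.
Theorem theorem1p1 (C : numClosedFieldType) (n : nat) (e : rel 'I_n)
  (phi : 'I_n -> 'I_n -> C) :
  simple_graph e -> unit_gain e phi ->
  (2 * n)%:Z - 2 * cyclomatic e - 2 * (indep_num e)%:Z <= (\rank (gain_adj e phi))%:Z
  /\ (\rank (gain_adj e phi))%:Z <= (2 * n)%:Z - 2 * (indep_num e)%:Z.
Proof.
move=> [sym_e irr_e] /unit_gain_neq0 phi_e.
have lower := mxrank_gain_adj_lower sym_e irr_e phi_e.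
have upper := mxrank_gain_adj_indep e phi.
have := indep_num_le e; rewrite /cyclomatic; split; lia.
Qed.
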